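(* Let $R$ be a left coherent ring and $M\in R\text{-}\mathbf{Mod}$. Then (1) $\ker(\mathrm{Defect})\subseteq\ker(\mathrm{ev}_M)$ if and only if $M$ is fp-injective; (2) $\ker(\mathrm{Defect})=\ker(\mathrm{ev}_M)$ if and only if $M$ is fp-injective and an fp-cogenerator.
   Context: $R$ is left coherent if every finitely generated left ideal is finitely presented; then $R\text{-}\mathbf{mod}$ (finitely presented left modules) is abelian. $R\text{-}\mathbf{mod}\text{-}\mathbf{mod}$ is the abelian category of finitely presented additive functors $\mathcal G:R\text{-}\mathbf{mod}\to\mathbf{Ab}$ (with a presentation $\operatorname{Hom}(N',-)\xrightarrow{\operatorname{Hom}(\alpha,-)}\operatorname{Hom}(N,-)\to\mathcal G\to0$, $\alpha:N\to N'$ in $R\text{-}\mathbf{mod}$); $\mathrm{Defect}(\mathcal G):=\ker(\alpha)$, and $\ker(\mathrm{Defect})$ is the full subcategory of $\mathcal G$ with $\mathrm{Defect}(\mathcal G)=0$. Each $\mathcal G$ is identified with its extension to all left modules commuting with filtered colimits; $\mathrm{ev}_M(\mathcal G)=\mathcal G(M)$, and $\ker(\mathrm{ev}_M)$ is the full subcategory of $\mathcal G$ with $\mathcal G(M)=0$. $M$ is fp-injective if $\operatorname{Ext}^1(N,M)=0$ for all finitely presented left modules $N$; $M$ is an fp-cogenerator if $\operatorname{Hom}(-,M):(R\text{-}\mathbf{mod})^{\mathrm{op}}\to\mathbf{Ab}$ is faithful. *)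

From HB Require Import structures.
From mathcomp Require Import all_boot all_algebra.
Set Implicit Arguments. Unset Strict Implicit. Unset Printing Implicit Defensive.
Import GRing.Theory.
Local Open Scope ring_scope.

(* Left R-modules are [lmodType R]; R-linear maps are [{linear U -> V}].
   The free module R^n is the row space ['rV[R]_n] (left scalar action). *)

Definition fin_presented (R : nzRingType) (N : lmodType R) : Prop :=
  exists (m n : nat) (q : {linear 'rV[R]_m -> 'rV[R]_n})
         (p : {linear 'rV[R]_n -> N}),
    (forall x : N, exists y, p y = x) /\
    (forall y, p y = 0 <-> exists z, q z = y).

(** Left coherence: every finitely generated left ideal I = R a_1 + ... + R a_n
    of R is finitely presented, i.e. isomorphic (via an injective linear map
    into the regular module R^o with image I) to a finitely presented module. *)
Definition left_coherent (R : nzRingType) : Prop :=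
  forall (n : nat) (a : 'I_n -> R),
    exists (V : lmodType R) (j : {linear V -> R^o}),
      injective j /\
      (forall x : R, (exists v, j v = x) <->
                     exists r : 'I_n -> R, x = \sum_(i < n) r i * a i) /\
      fin_presented V.

(** Ext^1(N, M) = 0, with Ext^1 in its Yoneda description: every short exact
    sequence 0 -> M -> E -> N -> 0 of left R-modules splits. *)
Definition Ext1_zero (R : nzRingType) (N M : lmodType R) : Prop :=
  forall (E : lmodType R) (i : {linear M -> E}) (p : {linear E -> N}),
    injective i ->
    (forall x : N, exists e, p e = x) ->
    (forall e, p e = 0 <-> exists m, i m = e) ->
    exists r : {linear E -> M}, forall m, r (i m) = m.

Definition fp_injective (R : nzRingType) (M : lmodType R) : Prop :=
  forall N : lmodType R, fin_presented N -> Ext1_zero N M.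

Definition fp_cogenerator (R : nzRingType) (M : lmodType R) : Prop :=
  forall (N N' : lmodType R), fin_presented N -> fin_presented N' ->
  forall f f' : {linear N -> N'},
    (forall g : {linear N' -> M}, forall x, g (f x) = g (f' x)) ->
    forall x, f x = f' x.

(** A finitely presented functor G : R-mod -> Ab, given by a presentation
    Hom(N', -) --Hom(alpha,-)--> Hom(N, -) --> G --> 0 with alpha : N -> N'
    in R-mod.  Every object of R-mod-mod arises this way. *)
Record fp_functor (R : nzRingType) := FpFunctor {
  fpf_src : lmodType R;
  fpf_tgt : lmodType R;
  fpf_src_fp : fin_presented fpf_src;
  fpf_tgt_fp : fin_presented fpf_tgt;
  fpf_alpha : {linear fpf_src -> fpf_tgt}
}.

(** Defect(G) = ker(alpha); Defect(G) = 0 means alpha is a monomorphism. *)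
Definition defect_zero (R : nzRingType) (G : fp_functor R) : Prop :=
  forall x, fpf_alpha G x = 0 -> x = 0.

(** G(M) for an arbitrary module M, G extended so as to commute with filtered
    colimits: G(M) = coker(Hom(N', M) -> Hom(N, M)).  G(M) = 0 means every
    map N -> M factors through alpha. *)
Definition ev_zero (R : nzRingType) (G : fp_functor R) (M : lmodType R) : Prop :=
  forall f : {linear fpf_src G -> M},
    exists g : {linear fpf_tgt G -> M}, forall x, f x = g (fpf_alpha G x).

(* A functor G given by alpha : N -> N' in R-mod has zero defect iff alpha
   is a monomorphism, and vanishes at M iff every map N -> M extends along
   alpha.  So (1) says: M is fp-injective iff maps into M extend along every
   monomorphism of finitely presented modules.
   - If M is fp-injective, the pushout of alpha along f : N -> M is an
     extension of M by coker alpha, which is finitely presented; its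
     splitting yields the extension of f.
   - Conversely, given an extension 0 -> M -> E -> N -> 0 with N presented by
     R^m --q--> R^n --> N, coherence makes the image of q finitely presented,
     so the inclusion im q -> R^n is a monomorphism of R-mod; extending along
     it corrects a lift R^n -> E into a section of E -> N.
   For (2): if M is an fp-cogenerator, a functor vanishing at M has zero
   defect (an element of ker alpha spans a map R -> N killed by all maps to M);
   if every functor vanishing at M has zero defect, applying this to the
   cokernel of f - f' shows that Hom(-, M) is faithful. *)
From HB Require Import structures.
From mathcomp Require Import all_boot all_algebra.
From Stdlib Require Import ClassicalEpsilon FunctionalExtensionality PropExtensionality.
Set Implicit Arguments. Unset Strict Implicit. Unset Printing Implicit Defensive.
Import GRing.Theory.
Local Open Scope ring_scope.

Definition linmap (R : nzRingType) (U V : lmodType R) (f : U -> V)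
  (f_lin : linear f) : {linear U -> V} :=
  HB.pack f (GRing.isLinear.Build R U V *:%R f f_lin).

Record submod (R : nzRingType) (V : lmodType R) := Submod {
  in_submod : V -> Prop;
  submod0 : in_submod 0;
  submodD : forall x y, in_submod x -> in_submod y -> in_submod (x + y);
  submodZ : forall (a : R) x, in_submod x -> in_submod (a *: x) }.

(* The quotient module V / P.  Each class modulo P gets a canonical
   representative chosen by Hilbert's epsilon, and V / P is the subtype of
   the representatives; the operations of V are transported along the
   projection mkq. *)
Section Quotient.
Variables (R : nzRingType) (V : lmodType R) (P : submod V).
Local Notation S := (in_submod P).

Lemma submodN x : S x -> S (- x).
Proof. by move=> Sx; rewrite -scaleN1r; apply: submodZ. Qed.

Lemma submodB x y : S x -> S y -> S (x - y).
Proof. by move=> Sx Sy; apply: submodD => //; apply: submodN. Qed.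

Definition canon (v : V) : V := epsilon (inhabits 0) (fun w => S (w - v)).

Lemma canonP v : S (canon v - v).
Proof.
apply: (epsilon_spec (inhabits 0) (fun w => S (w - v))).
by exists v; rewrite subrr; apply: submod0.
Qed.

Lemma canon_eq v w : S (v - w) -> canon v = canon w.
Proof.
move=> Svw; rewrite /canon; congr epsilon; apply: functional_extensionality => u.
apply: propositional_extensionality; split => Su.
- by rewrite -(subrK v u) -addrA; apply: submodD.
- have -> : u - v = (u - w) - (v - w) by rewrite opprB addrA subrK.
  exact: submodB.
Qed.

Lemma canon_id v : canon (canon v) = canon v.
Proof. exact/canon_eq/canonP. Qed.

Definition quot := {v : V | canon v == v}.
HB.instance Definition _ := Choice.copy quot {v : V | canon v == v}.

Definition mkq (v : V) : quot := exist _ (canon v) (introT eqP (canon_id v)).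

Lemma mkq_eq v w : S (v - w) -> mkq v = mkq w.
Proof. by move=> Svw; apply: val_inj; rewrite /= (canon_eq Svw). Qed.

Lemma mkq_eqP v w : mkq v = mkq w -> S (v - w).
Proof.
move=> /(congr1 val) /= e.
have -> : v - w = - (canon v - v) + (canon w - w) by rewrite e opprB addrA subrK.
by apply: submodD; [apply: submodN |]; apply: canonP.
Qed.

Lemma mkq_val x : mkq (val x) = x.
Proof. by apply: val_inj => /=; apply/eqP; case: x. Qed.

Lemma quot_ind (Q : quot -> Prop) : (forall v, Q (mkq v)) -> forall x, Q x.
Proof. by move=> h x; rewrite -(mkq_val x). Qed.

Lemma val_mkq v : S (val (mkq v) - v).
Proof. exact: canonP. Qed.

Definition qadd (x y : quot) := mkq (val x + val y).
Definition qopp (x : quot) := mkq (- val x).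
Definition qscale (a : R) (x : quot) := mkq (a *: val x).

Lemma qaddE u v : qadd (mkq u) (mkq v) = mkq (u + v).
Proof.
apply: mkq_eq; rewrite opprD addrACA.
by apply: submodD; apply: val_mkq.
Qed.

Lemma qoppE u : qopp (mkq u) = mkq (- u).
Proof. by apply: mkq_eq; rewrite -opprD; apply/submodN/val_mkq. Qed.

Lemma qscaleE a u : qscale a (mkq u) = mkq (a *: u).
Proof. by apply: mkq_eq; rewrite -scalerBr; apply/submodZ/val_mkq. Qed.

Lemma qaddA : associative qadd.
Proof.
by elim/quot_ind => u; elim/quot_ind => v; elim/quot_ind => w; rewrite !qaddE addrA.
Qed.

Lemma qaddC : commutative qadd.
Proof. by elim/quot_ind => u; elim/quot_ind => v; rewrite !qaddE addrC. Qed.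

Lemma qadd0 : left_id (mkq 0) qadd.
Proof. by elim/quot_ind => u; rewrite qaddE add0r. Qed.

Lemma qaddN : left_inverse (mkq 0) qopp qadd.
Proof. by elim/quot_ind => u; rewrite qoppE qaddE addNr. Qed.

HB.instance Definition _ := GRing.isZmodule.Build quot qaddA qaddC qadd0 qaddN.

Lemma addqE u v : mkq u + mkq v = mkq (u + v).
Proof. exact: qaddE. Qed.

Lemma qscaleA a b x : qscale a (qscale b x) = qscale (a * b) x.
Proof. by elim/quot_ind: x => v; rewrite !qscaleE scalerA. Qed.

Lemma qscale1 : left_id 1 qscale.
Proof. by elim/quot_ind => v; rewrite qscaleE scale1r. Qed.

Lemma qscaleDr : right_distributive qscale +%R.
Proof.
move=> a; elim/quot_ind => u; elim/quot_ind => v.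
by rewrite addqE !qscaleE addqE scalerDr.
Qed.

Lemma qscaleDl x : {morph qscale^~ x : a b / a + b}.
Proof. by elim/quot_ind: x => v a b; rewrite !qscaleE addqE scalerDl. Qed.

HB.instance Definition _ :=
  GRing.Zmodule_isLmodule.Build R quot qscaleA qscale1 qscaleDr qscaleDl.

Lemma scaleqE a u : a *: mkq u = mkq (a *: u).
Proof. exact: qscaleE. Qed.

Lemma mkq_linear : linear mkq.
Proof. by move=> a u v; rewrite scaleqE addqE. Qed.

Definition qproj : {linear V -> quot} := linmap mkq_linear.

Lemma qproj_eq0 v : qproj v = 0 <-> S v.
Proof.
split; first by move/mkq_eqP; rewrite subr0.
by move=> Sv; apply: mkq_eq; rewrite subr0.
Qed.

Lemma qproj_surj (x : quot) : exists v, qproj v = x.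
Proof. by exists (val x); apply: mkq_val. Qed.

Section Factor.
Variables (W : lmodType R) (g : {linear V -> W}).
Hypothesis gP : forall v, S v -> g v = 0.

Lemma g_canon v : g (canon v) = g v.
Proof. by apply/eqP; rewrite -subr_eq0 -linearB; apply/eqP/gP/canonP. Qed.

Lemma qfact_linear : linear (fun x : quot => g (val x)).
Proof.
move=> a; elim/quot_ind => u; elim/quot_ind => v.
by rewrite scaleqE addqE /= !g_canon linearP.
Qed.

Definition qfact : {linear quot -> W} := linmap qfact_linear.

Lemma qfactE v : qfact (qproj v) = g v.
Proof. exact: g_canon. Qed.
End Factor.
End Quotient.

Section Cokernel.
Variables (R : nzRingType) (N V : lmodType R) (d : {linear N -> V}).

Lemma image0 : exists x, 0 = d x.
Proof. by exists 0; rewrite linear0. Qed.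

Lemma imageD v w : (exists x, v = d x) -> (exists x, w = d x) -> exists x, v + w = d x.
Proof. by move=> [x ->] [y ->]; exists (x + y); rewrite linearD. Qed.

Lemma imageZ (a : R) v : (exists x, v = d x) -> exists x, a *: v = d x.
Proof. by move=> [x ->]; exists (a *: x); rewrite linearZ. Qed.

Definition image_submod : submod V := Submod image0 imageD imageZ.

Definition coker := quot image_submod.
Definition coker_proj : {linear V -> coker} := qproj image_submod.

Lemma coker_proj_eq0 v : coker_proj v = 0 <-> exists x, v = d x.
Proof. exact: qproj_eq0. Qed.

Lemma coker_proj_eq v w : (exists x, v - w = d x) -> coker_proj v = coker_proj w.
Proof. exact: (@mkq_eq _ _ image_submod). Qed.

Lemma coker_proj_surj y : exists v, coker_proj v = y.
Proof. exact: qproj_surj. Qed.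

Lemma coker_factor (W : lmodType R) (g : {linear V -> W}) :
  (forall x, g (d x) = 0) -> exists h : {linear coker -> W}, forall v, h (coker_proj v) = g v.
Proof.
move=> gd; have gP : forall v, in_submod image_submod v -> g v = 0 by move=> v [x ->].
by exists (qfact gP) => v; apply: qfactE.
Qed.
End Cokernel.

Section LinearChoice.
Variable R : nzRingType.

Lemma free_lift (Y V : lmodType R) (p : {linear Y -> V}) k (g : {linear 'rV[R]_k -> V}) :
  (forall v, exists y, p y = v) ->
  exists l : {linear 'rV[R]_k -> Y}, forall x, p (l x) = g x.
Proof.
move=> p_surj.
have [w wP] := choice (fun i y => p y = g (delta_mx 0 i)) (fun i => p_surj _).
have l_lin : linear (fun x : 'rV[R]_k => \sum_i x 0 i *: w i).
  move=> a x y; rewrite scaler_sumr -big_split; apply: eq_bigr => i _.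
  by rewrite !mxE scalerDl scalerA.
exists (linmap l_lin) => x; rewrite [in RHS](row_sum_delta x) !linear_sum.
by apply: eq_bigr => i _; rewrite !linearZ wP.
Qed.

Lemma factor_mono (X M E : lmodType R) (i : {linear M -> E}) (g : {linear X -> E}) :
  injective i -> (forall x, exists m, i m = g x) ->
  exists h : {linear X -> M}, forall x, i (h x) = g x.
Proof.
move=> i_inj g_im; have [h hP] := choice (fun x m => i m = g x) g_im.
have h_lin : linear h by move=> a x y; apply: i_inj; rewrite linearP !hP linearP.
by exists (linmap h_lin).
Qed.

Lemma factor_epi (Y N E : lmodType R) (p : {linear Y -> N}) (s : {linear Y -> E}) :
  (forall n, exists y, p y = n) -> (forall y, p y = 0 -> s y = 0) ->
  exists t : {linear N -> E}, forall y, t (p y) = s y.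
Proof.
move=> p_surj s_ker; have [pr prP] := choice (fun n y => p y = n) p_surj.
have s_eq y y' : p y = p y' -> s y = s y'.
  move=> e; apply/eqP; rewrite -subr_eq0 -linearB; apply/eqP/s_ker.
  by rewrite linearB e subrr.
have t_lin : linear (fun n => s (pr n)).
  by move=> a x y /=; rewrite -linearP; apply: s_eq; rewrite !linearP !prP.
by exists (linmap t_lin) => y /=; apply: s_eq; rewrite prP.
Qed.

Lemma split_of_section (M E N : lmodType R) (i : {linear M -> E}) (p : {linear E -> N})
    (s : {linear N -> E}) :
  injective i -> (forall e, p e = 0 <-> exists m, i m = e) -> (forall n, p (s n) = n) ->
  exists r : {linear E -> M}, forall m, r (i m) = m.
Proof.
move=> i_inj exact_p ps.
have pi0 m : p (i m) = 0 by apply/exact_p; exists m.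
have [r rP] : exists r : {linear E -> M}, forall e, i (r e) = e - s (p e).
  apply: (factor_mono (g := idfun \- (s \o p))) i_inj _ => e.
  by apply/exact_p; rewrite /= linearB ps subrr.
by exists r => m; apply: i_inj; rewrite rP /= pi0 linear0 subr0.
Qed.
End LinearChoice.

Section FinitelyPresented.
Variable R : nzRingType.

Lemma fp_rV n : fin_presented 'rV[R]_n.
Proof.
exists 0%N, n, \0, idfun; split=> [x | y]; first by exists x.
by split=> [/= -> | [z <-] //]; exists 0.
Qed.

(* The cokernel of a map between finitely presented modules is finitely
   presented: a presentation of V, enlarged by the generators of N mapped
   into V, presents coker d. *)
Lemma fp_coker (V N : lmodType R) (d : {linear N -> V}) :
  fin_presented V -> fin_presented N -> fin_presented (coker d).
Proof.
move=> [m [n [q [p [p_surj p_ker]]]]] [_ [k [_ [pN [pN_surj _]]]]].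
have [l lP] := free_lift (d \o pN) p_surj.
exists (m + k)%N, n, ((q \o lsubmx) \+ (l \o rsubmx)), (coker_proj d \o p).
split.
  move=> x; have [v <-] := coker_proj_surj x; have [y <-] := p_surj v.
  by exists y.
move=> y; rewrite /= coker_proj_eq0; split.
- move=> [x e]; have [z2 ez2] := pN_surj x.
  have /p_ker [z1 ez1] : p (y - l z2) = 0 by rewrite linearB lP /= ez2 e subrr.
  by exists (row_mx z1 z2); rewrite /= row_mxKl row_mxKr ez1 subrK.
- move=> [z <-]; exists (pN (rsubmx z)).
  have pq0 : p (q (lsubmx z)) = 0 by apply/p_ker; exists (lsubmx z).
  by rewrite /= linearD pq0 lP add0r.
Qed.
End FinitelyPresented.

(* Over a left coherent ring, left kernels of matrices are finitely
   generated.  For a single column c this is coherence applied to the left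
   ideal generated by the entries of c; the general case follows by
   induction on the number of columns. *)
Section CoherentKernels.
Variable R : nzRingType.

Definition fg_kernel m n (Q : 'M[R]_(m, n)) : Prop :=
  exists k (D : 'M[R]_(k, m)), forall x : 'rV_m, x *m Q = 0 <-> exists z, x = z *m D.

Definition in_left_ideal k (c : 'cV[R]_k) (r : R) : Prop :=
  exists x : 'rV_k, r = (x *m c) 0 0.

Lemma mx11_eq0 (A : 'M[R]_1) : A = 0 <-> A 0 0 = 0.
Proof.
split=> [-> | A0]; first by rewrite mxE.
by apply/matrixP => i j; rewrite !ord1 A0 mxE.
Qed.

Lemma ideal_combination k n (c : 'cV[R]_k) (Psi : 'cV[R]_n) :
  (forall i, in_left_ideal c (Psi i 0)) -> exists A : 'M[R]_(n, k), A *m c = Psi.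
Proof.
move=> Psi_c; have [f fP] := choice (fun i x => Psi i 0 = (x *m c) 0 0) Psi_c.
exists (\matrix_i f i); apply/matrixP => i j.
by rewrite ord1 fP -(rowK f i) -row_mul [RHS]mxE.
Qed.

(* Columns generating the same left ideal have equally generated kernels:
   x *m c = 0 iff x = x (1 - B A) + (x B) A with x B in the kernel of Psi. *)
Lemma kernel_transfer k n (c : 'cV[R]_k) (Psi : 'cV[R]_n) A B :
  A *m c = Psi -> B *m Psi = c -> fg_kernel Psi -> fg_kernel c.
Proof.
move=> Ac BPsi [l [Q hQ]].
exists (k + l)%N, (col_mx (1%:M - B *m A) (Q *m A)) => x; split.
- move=> xc0; have /hQ [z ez] : (x *m B) *m Psi = 0 by rewrite -mulmxA BPsi.
  exists (row_mx x z).
  by rewrite mul_row_col mulmxBr mulmx1 !mulmxA -ez subrK.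
- move=> [z ->]; rewrite -[z]hsubmxK mul_row_col mulmxDl mulmxBr mulmx1 mulmxBl.
  rewrite -!mulmxA Ac BPsi subrr add0r mulmxA.
  by apply/hQ; exists (rsubmx z).
Qed.

Lemma coherent_ideal_kernel : left_coherent R -> forall k (c : 'cV[R]_k),
  exists n (Psi : 'cV[R]_n), [/\ fg_kernel Psi,
    forall i, in_left_ideal c (Psi i 0) & forall i, in_left_ideal Psi (c i 0)].
Proof.
move=> coh k c.
have [V [j [j_inj [j_im [m [n [q [p [p_surj p_ker]]]]]]]]] := coh k (fun i => c i 0).
pose Psi : 'cV[R]_n := \col_i (j (p (delta_mx 0 i)) : R).
have PsiE y : (j (p y) : R) = (y *m Psi) 0 0.
  rewrite {1}(row_sum_delta y) !linear_sum mxE /=.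
  by apply: eq_bigr => i _; rewrite !linearZ /= mxE.
exists n, Psi; split.
- exists m, (lin1_mx q) => y; rewrite mx11_eq0 -PsiE; split.
  + have -> : 0 = j 0 by rewrite linear0.
    by move/j_inj/p_ker => [z <-]; exists z; rewrite mul_rV_lin1.
  + by move=> [z ->]; rewrite mul_rV_lin1 (proj2 (p_ker _)) ?linear0 //; exists z.
- move=> i; have [r er] := proj1 (j_im (Psi i 0)) (ex_intro _ _ (esym (mxE _ _ _ _))).
  by exists (\row_l r l); rewrite er mxE; apply: eq_bigr => l _; rewrite mxE.
- move=> i; have [v ev] : exists v, j v = c i 0.
    apply/j_im; exists (fun l => (l == i)%:R).
    by rewrite (bigD1 i) //= big1 => [|l /negbTE ->]; rewrite ?eqxx ?mul1r ?addr0 ?mul0r.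
  by have [y ey] := p_surj v; exists y; rewrite -PsiE ey ev.
Qed.

Lemma coherent_column_kernel : left_coherent R -> forall k (c : 'cV[R]_k), fg_kernel c.
Proof.
move=> coh k c; have [n [Psi [Psi_ker Psi_c c_Psi]]] := coherent_ideal_kernel coh c.
have [A Ac] := ideal_combination Psi_c; have [B BPsi] := ideal_combination c_Psi.
exact: kernel_transfer Ac BPsi Psi_ker.
Qed.

Lemma coherent_kernel : left_coherent R -> forall m n (Q : 'M[R]_(m, n)), fg_kernel Q.
Proof.
move=> coh m n; elim: n m => [|n IH] m Q.
  exists m, 1%:M => x; split=> _; first by exists x; rewrite mulmx1.
  by apply/matrixP => i [].
pose Ql := lsubmx (Q : 'M_(m, 1 + n)); pose Qr := rsubmx (Q : 'M_(m, 1 + n)).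
have [k1 [D1 hD1]] := IH m Qr.
have [k2 [D2 hD2]] := coherent_column_kernel coh (D1 *m Ql).
have Q0 (x : 'rV_m) : x *m (Q : 'M_(m, 1 + n)) = 0 <-> x *m Ql = 0 /\ x *m Qr = 0.
  rewrite -(hsubmxK (Q : 'M_(m, 1 + n))) mul_mx_row.
  split=> [/eqP | [-> ->]]; last by rewrite row_mx0.
  by rewrite row_mx_eq0 => /andP[/eqP -> /eqP ->].
exists k2, (D2 *m D1) => x; split.
- move/Q0 => [xl0 /hD1 [z ez]].
  have /hD2 [w ew] : z *m (D1 *m Ql) = 0 by rewrite mulmxA -ez.
  by exists w; rewrite ez ew mulmxA.
- move=> [w ->]; apply/Q0; split.
  + by rewrite -!mulmxA mulmxA; apply/hD2; exists w.
  + by rewrite mulmxA; apply/hD1; exists (w *m D2).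
Qed.
End CoherentKernels.

(* Over a coherent ring, the image of a map of finitely generated free
   modules is finitely presented: it is R^m / ker q, and ker q is finitely
   generated. *)
Lemma coherent_image_fp (R : nzRingType) : left_coherent R ->
  forall m n (q : {linear 'rV[R]_m -> 'rV[R]_n}),
  exists (K : lmodType R) (alpha : {linear K -> 'rV[R]_n}),
    [/\ fin_presented K, forall x, alpha x = 0 -> x = 0 &
        forall y, (exists x, alpha x = y) <-> exists z, q z = y].
Proof.
move=> coh m n q; have [k [D hD]] := coherent_kernel coh (lin1_mx q).
have q_ker x : q x = 0 <-> exists z, x = mulmxr D z by rewrite -mul_rV_lin1; apply: hD.
have [alpha alphaE] := coker_factor (g := q) (fun z => proj2 (q_ker _) (ex_intro _ z erefl)).
exists (coker (mulmxr D)), alpha; split.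
- exact: fp_coker (fp_rV R m) (fp_rV R k).
- move=> x; have [v <-] := coker_proj_surj x.
  by rewrite alphaE coker_proj_eq0 => /q_ker.
- move=> y; split=> [[x <-] | [z <-]]; last by exists (coker_proj _ z); rewrite alphaE.
  by have [v <-] := coker_proj_surj x; exists v; rewrite alphaE.
Qed.

(* The pushout of a monomorphism alpha : A -> B along f : A -> M,
   realised as (M * B) / {(f a, - alpha a)}.  It is an extension of M by
   coker alpha, through which f extends along alpha. *)
Section Pushout.
Variables (R : nzRingType) (A B M : lmodType R).
Variables (alpha : {linear A -> B}) (f : {linear A -> M}).

Lemma push_rel_linear : linear (fun a => (f a, - alpha a)).
Proof.
by move=> c a a'; apply: injective_projections; rewrite /= !linearP // opprD -scalerN.
Qed.

Lemma inl_linear : linear (fun m : M => (m, 0 : B)).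
Proof. by move=> c u v; apply: injective_projections => /=; rewrite ?scaler0 ?addr0. Qed.

Lemma inr_linear : linear (fun b : B => (0 : M, b)).
Proof. by move=> c u v; apply: injective_projections => /=; rewrite ?scaler0 ?addr0. Qed.

Definition push_rel : {linear A -> (M * B)%type} := linmap push_rel_linear.
Definition pushout := coker push_rel.
Definition push_M : {linear M -> pushout} := coker_proj push_rel \o linmap inl_linear.
Definition push_B : {linear B -> pushout} := coker_proj push_rel \o linmap inr_linear.

Lemma push_comm a : push_M (f a) = push_B (alpha a).
Proof.
apply: coker_proj_eq; exists a.
by apply: injective_projections => /=; rewrite ?subr0 ?sub0r.
Qed.

Lemma push_M_inj : (forall a, alpha a = 0 -> a = 0) -> injective push_M.
Proof.
move=> alpha_mono; apply: raddf_inj => m /coker_proj_eq0 [a [-> /esym/eqP]].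
by rewrite oppr_eq0 => /eqP/alpha_mono ->; rewrite linear0.
Qed.

Lemma push_coker_ex : exists pc : {linear pushout -> coker alpha},
  forall x : (M * B)%type, pc (coker_proj push_rel x) = coker_proj alpha x.2.
Proof.
have snd_lin : linear (fun x : (M * B)%type => coker_proj alpha x.2) by move=> c x y; rewrite -linearP.
apply: (coker_factor (g := linmap snd_lin)) => a.
by apply/coker_proj_eq0; exists (- a); rewrite linearN.
Qed.

Lemma pushout_exact : (forall a, alpha a = 0 -> a = 0) ->
  exists pc : {linear pushout -> coker alpha}, [/\ injective push_M,
    forall y, exists e, pc e = y & forall e, pc e = 0 <-> exists m, push_M m = e].
Proof.
move=> alpha_mono; have [pc pcE] := push_coker_ex.
exists pc; split; first exact: push_M_inj.
- move=> y; have [b <-] := coker_proj_surj y.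
  by exists (push_B b); rewrite /= pcE.
- move=> e; have [[m b] <-] := coker_proj_surj e; rewrite pcE /= coker_proj_eq0.
  split=> [[a ->] | [m' em']].
  + exists (m + f a); apply: coker_proj_eq; exists a.
    by apply: injective_projections; rewrite /= ?sub0r // addrAC subrr add0r.
  + have /coker_proj_eq0 [a [_ eb]] : coker_proj push_rel ((m', 0) - (m, b)) = 0.
      by apply/eqP; rewrite linearB subr_eq0; apply/eqP; exact: em'.
    by exists a; rewrite /= sub0r in eb; apply/oppr_inj.
Qed.
End Pushout.

Section Characterisations.
Variables (R : nzRingType) (M : lmodType R).

(* (1, <=) An fp-injective module extends maps along monomorphisms of R-mod:
   split the pushout extension of M by coker alpha. *)
Lemma fp_injective_extends : fp_injective M ->
  forall G : fp_functor R, defect_zero G -> ev_zero G M.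
Proof.
move=> M_inj [A B A_fp B_fp alpha] alpha_mono f /=.
have [pc [i_inj pc_surj pc_exact]] := pushout_exact f alpha_mono.
have [r rP] := M_inj _ (fp_coker alpha B_fp A_fp) _ _ _ i_inj pc_surj pc_exact.
by exists (r \o push_B alpha f) => a; rewrite -[in LHS](rP (f a)) push_comm.
Qed.

(* (1, =>) Given 0 -> M -> E -> N -> 0 and a presentation R^m -> R^n -> N,
   a lift s : R^n -> E of R^n -> N restricts on the image K of R^m (finitely
   presented by coherence) to a map into M; extending that map to h : R^n -> M
   turns s - h into a section of E -> N. *)
Lemma extends_fp_injective : left_coherent R ->
  (forall G : fp_functor R, defect_zero G -> ev_zero G M) -> fp_injective M.
Proof.
move=> coh M_ext N [m [n [q [p0 [p0_surj p0_ker]]]]] E i p i_inj p_surj p_exact.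
have [K [alpha [K_fp alpha_mono alpha_im]]] := coherent_image_fp coh q.
have [s sP] := free_lift p0 p_surj.
have [t tP] : exists t : {linear K -> M}, forall x, i (t x) = s (alpha x).
  apply: (factor_mono (g := s \o alpha)) i_inj _ => x.
  have [z ez] := proj1 (alpha_im _) (ex_intro _ x erefl).
  by apply/p_exact; rewrite /= sP -ez; apply/p0_ker; exists z.
have [h hP] := M_ext (FpFunctor K_fp (fp_rV R n) alpha) alpha_mono t.
have [sec secP] : exists sec : {linear N -> E}, forall y, sec (p0 y) = s y - i (h y).
  apply: (factor_epi (s := s \- (i \o h))) p0_surj _ => y /p0_ker /alpha_im [x <-].
  by rewrite /= -hP tP subrr.
have pi0 x : p (i x) = 0 by apply/p_exact; exists x.
apply: (split_of_section (s := sec)) i_inj p_exact _ => y.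
by have [v <-] := p0_surj y; rewrite secP linearB sP pi0 subr0.
Qed.

(* (2, <=) If M is an fp-cogenerator, a functor vanishing at M has zero
   defect: for x in ker alpha, the map R -> N, r |-> r x, is killed by every
   map N -> M, hence is zero. *)
Lemma cogenerator_defect_zero : fp_cogenerator M ->
  forall G : fp_functor R, ev_zero G M -> defect_zero G.
Proof.
move=> M_cogen [A B A_fp B_fp alpha] M_ev x /= alpha_x.
have spanx_lin : linear (fun r : 'rV[R]_1 => r 0 0 *: x).
  by move=> c u v; rewrite !mxE scalerDl scalerA.
have := M_cogen _ _ (fp_rV R 1) A_fp (linmap spanx_lin) \0 _ (const_mx 1).
rewrite /= mxE scale1r; apply=> g r /=.
have [g' g'P] := M_ev g.
by rewrite linear0 linearZ /= g'P alpha_x !linear0 scaler0.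
Qed.

(* (2, =>) If every functor vanishing at M has zero defect, Hom(-, M) is
   faithful: apply this to the cokernel of f - f'. *)
Lemma defect_zero_cogenerator :
  (forall G : fp_functor R, ev_zero G M -> defect_zero G) -> fp_cogenerator M.
Proof.
move=> M_defect N N' N_fp N'_fp f f' fg_eq x.
pose G := FpFunctor N'_fp (fp_coker (f \- f') N'_fp N_fp) (coker_proj (f \- f')).
have G_defect : defect_zero G.
  apply: M_defect => g /=.
  have g_kill y : g ((f \- f') y) = 0 by rewrite /= linearB fg_eq subrr.
  have [h hP] := coker_factor g_kill.
  by exists h => y; rewrite [RHS]hP.
apply/eqP; rewrite -subr_eq0; apply/eqP/G_defect.
exact: (proj2 (coker_proj_eq0 _ _) (ex_intro _ x erefl)).
Qed.
End Characterisations.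

Theorem mainTheorem9 (R : nzRingType) (M : lmodType R) :
  left_coherent R ->
  ((forall G : fp_functor R, defect_zero G -> ev_zero G M) <-> fp_injective M) /\
  ((forall G : fp_functor R, defect_zero G <-> ev_zero G M) <->
     fp_injective M /\ fp_cogenerator M).
Proof.
move=> coh; split.
  by split; [exact: extends_fp_injective | exact: fp_injective_extends].
split=> [G_iff | [M_inj M_cogen] G].
- split; first by apply: extends_fp_injective => // G /G_iff.
  by apply: defect_zero_cogenerator => G /G_iff.
- by split; [exact: fp_injective_extends | exact: cogenerator_defect_zero].
Qed.
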